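(* Let $\mathfrak g=\mathfrak k\oplus\mathfrak m$ be a Pauli-spanned Cartan decomposition and let $b_1,\dots,b_d\in\tilde{\mathfrak m}$, $d\ge2$, be pairwise commuting Pauli strings (spanning an Abelian subalgebra $\mathfrak b\subseteq\mathfrak m$), all lying in the same connected component of the frustration graph of $\mathfrak g$. Assume the basis has no associative structure, meaning that for no three distinct indices $p,q,s$ is $i\,b_pb_qb_s\in\mathfrak m$. Then for every $1\le r\le d$, $$|\tilde{\mathfrak k}^r_{1\dots r-1}|=|\tilde{\mathfrak k}^1_{2\dots d}|+(d-r)\,|\tilde{\mathfrak k}^{12}_{3\dots d}|.$$
   Context: Pauli strings on $n$ qubits are tensor products of $I,X,Y,Z$, not all identity; two Pauli strings either commute or anticommute. A Pauli-spanned Cartan decomposition is $\mathfrak g=\mathfrak k\oplus\mathfrak m\subseteq\mathfrak{su}(2^n)$ with $\mathfrak k=\mathrm{span}_{i\mathbb R}\tilde{\mathfrak k}$, $\mathfrak m=\mathrm{span}_{i\mathbb R}\tilde{\mathfrak m}$, $\mathfrak g=\mathrm{span}_{i\mathbb R}\tilde{\mathfrak g}$ with $\tilde{\mathfrak g}=\tilde{\mathfrak k}\sqcup\tilde{\mathfrak m}$ the set of all Pauli strings (up to phase) $\sigma$ with $i\sigma\in\mathfrak g$, and $[\mathfrak k,\mathfrak k]\subseteq\mathfrak k$, $[\mathfrak m,\mathfrak m]\subseteq\mathfrak k$, $[\mathfrak k,\mathfrak m]\subseteq\mathfrak m$. The frustration graph of $\mathfrak g$ has vertex set $\tilde{\mathfrak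 g}$, with edges between anticommuting pairs. For disjoint index lists, $\tilde{\mathfrak k}^{i_1i_2\dots}_{j_1j_2\dots}$ is the set of $k\in\tilde{\mathfrak k}$ anticommuting with every $b_{i_p}$ and commuting with every $b_{j_q}$ (no condition on other indices); e.g. $\tilde{\mathfrak k}^1_{2\dots d}$ anticommutes with $b_1$ and commutes with $b_2,\dots,b_d$, and $\tilde{\mathfrak k}^{12}_{3\dots d}$ anticommutes with $b_1,b_2$ and commutes with $b_3,\dots,b_d$. *)

From mathcomp Require Import all_boot.
Set Implicit Arguments. Unset Strict Implicit. Unset Printing Implicit Defensive.

(* A Pauli string on n qubits, up to phase: for each qubit a pair (x,z) of bits,
   (0,0)=I, (1,0)=X, (1,1)=Y, (0,1)=Z. *)
Definition pauli (n : nat) := {ffun 'I_n -> bool * bool}.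

Definition pauli_id (n : nat) : pauli n := [ffun _ => (false, false)].

Definition pmul (n : nat) (a b : pauli n) : pauli n :=
  [ffun i => (xorb (a i).1 (b i).1, xorb (a i).2 (b i).2)].

(* a and b anticommute iff the symplectic form is odd. *)
Definition anticomm (n : nat) (a b : pauli n) : bool :=
  odd (\sum_(i < n) (((a i).1 && (b i).2) (+) ((a i).2 && (b i).1) : nat)).

Definition commute_p (n : nat) (a b : pauli n) : bool := ~~ anticomm a b.

(* Pauli-spanned Cartan decomposition g = k (+) m, given by the sets of Pauli
   strings Kt = k~, Mt = m~ (g~ = Kt :|: Mt).  For spans of Pauli strings,
   [i s, i t] = 0 if s,t commute and is a nonzero real multiple of i (s t) if they
   anticommute, so the bracket conditions read as follows. *)
Definition cartan_pauli (n : nat) (Kt Mt : {set pauli n}) : Prop :=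
  [/\ [&& pauli_id n \notin Kt, pauli_id n \notin Mt & [disjoint Kt & Mt]],
      (* [k,k] <= k *)
      ({in Kt &, forall x y, anticomm x y -> pmul x y \in Kt}),
      (* [m,m] <= k *)
      ({in Mt &, forall x y, anticomm x y -> pmul x y \in Kt}) &
      (* [k,m] <= m *)
      ({in Kt & Mt, forall x y, anticomm x y -> pmul x y \in Mt})].

Definition frustration (n : nat) (Gt : {set pauli n}) : rel (pauli n) :=
  fun a b => [&& a \in Gt, b \in Gt & anticomm a b].

(* k~^{A}_{C}: elements of Kt anticommuting with all b_j (j in A) and commuting
   with all b_j (j in C); indices are 0-based naturals. *)
Definition ksub (n d : nat) (Kt : {set pauli n}) (b : 'I_d -> pauli n)
    (A C : pred nat) : {set pauli n} :=
  [set k in Kt | [forall j : 'I_d, (nat_of_ord j \in A) ==> anticomm k (b j)]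
              && [forall j : 'I_d, (nat_of_ord j \in C) ==> commute_p k (b j)]].

From mathcomp Require Import all_boot.
Set Implicit Arguments. Unset Strict Implicit. Unset Printing Implicit Defensive.

(* Let supp k be the set of indices j such that k anticommutes with b_j.  For k in
   k~, supp k has at most two elements: if k anticommuted with b_i, b_j and b_l, then
   k b_i, k b_i b_j, k b_i b_j b_l would lie alternately in m, k, m, and one more
   multiplication by k would put b_i b_j b_l in m.  So the left-hand side counts the
   k in k~ with supp k = {r} or supp k = {r, s} for some s > r.
   For h in k~ with supp h = {u, v}, the involution sending k to h k when k and h
   anticommute, and to h k b_u b_v otherwise, preserves k~ on the elements k with
   exactly one of u, v in supp k, and replaces supp k by its symmetric difference
   with {u, v}.  It matches the classes {u} and {v}, and {p, u} and {p, v}, as soon as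
   the class {u, v} is nonempty.  Connectedness of the frustration graph makes every
   class {p, q} nonempty, so all singleton classes have one size and all pair classes
   another. *)

Lemma addb_eq_eq2 (T : eqType) (x u v : T) :
  u != v -> (x == v) = (x == u) (+) ((x == u) || (x == v)).
Proof. by move=> uv; case: (eqVneq x u) => [->|//]; rewrite (negbTE uv). Qed.

Lemma addb_eq2_eq2 (T : eqType) (x p q s : T) : p != q -> q != s -> p != s ->
  ((x == p) || (x == s)) = ((x == p) || (x == q)) (+) ((x == q) || (x == s)).
Proof.
move=> pq qs ps.
case: (eqVneq x p) => [->|xp]; first by rewrite (negbTE pq).
case: (eqVneq x q) => [->|xq]; first by rewrite (negbTE qs).
by case: (eqVneq x s).
Qed.

Lemma card_involutive_swap (T : finType) (f : T -> T) (A B : {set T}) :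
  involutive f -> {in A, forall x, f x \in B} -> {in B, forall x, f x \in A} ->
  #|A| = #|B|.
Proof.
move=> finv; have finj := inv_inj finv.
have card_le (X Y : {set T}) : {in X, forall x, f x \in Y} -> #|X| <= #|Y|.
  move=> fXY; rewrite -(card_imset X finj).
  by apply/subset_leq_card/subsetP => _ /imsetP [x xX ->]; apply: fXY.
by move=> fAB fBA; apply/anti_leq; rewrite !card_le.
Qed.

Lemma card_indicator (T : finType) (A : {set T}) : #|A| = \sum_x (x \in A).
Proof. by rewrite -sum1_card big_mkcond. Qed.

Lemma least_card_le2 d (S : {set 'I_d}) (r : 'I_d) : #|S| <= 2 ->
  ((r \in S) && [forall j in S, r <= j] : nat) =
  (S == [set r]) + \sum_(s : 'I_d | r < s) (S == [set r; s]).
Proof.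
move=> S_le2; have [rS | rNS] := boolP (r \in S); last first.
  have neqS (T : {set 'I_d}) : r \in T -> (S == T) = false.
    by move=> rT; apply: contraNF rNS => /eqP ->.
  by rewrite neqS ?set11 // big1 // => s _; rewrite neqS // !inE eqxx.
have [S_r | [s]] := set_0Vmem (S :\ r).
  have -> : S = [set r] by rewrite -(setD1K rS) S_r setU0.
  rewrite eqxx big1 => [|s rs]; last by rewrite eqEcard cards1 cards2 neq_ltn rs andbF.
  suff -> : [forall j in [set r], r <= j] by [].
  by apply/forall_inP => j; rewrite inE => /eqP ->.
rewrite !inE => /andP [sr sS].
have -> : S = [set r; s].
  by apply/esym/eqP; rewrite eqEcard cards2 eq_sym sr S_le2 andbT subUset !sub1set rS.
rewrite /= [_ == [set r]]eq_sym eqEcard cards1 cards2 (eq_sym r) sr andbF add0n.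
have -> : [forall j in [set r; s], r <= j] = (r < s).
  have rs_neq : (r : nat) != s by rewrite val_eqE eq_sym.
  apply/forall_inP/idP => [/(_ s) | rs j].
    by rewrite !inE eqxx orbT ltn_neqAle rs_neq => ->.
  by rewrite !inE => /orP [] /eqP ->; [rewrite leqnn | rewrite ltnW].
have eq_pair t : ([set r; s] == [set r; t]) = (t == s).
  apply/eqP/eqP => [rsrt | -> //].
  by move/setP/(_ s): rsrt; rewrite !inE eqxx orbT (negbTE sr) => /esym/eqP.
under eq_bigr do rewrite eq_pair.
case: ltnP => [rs | sr'].
  by rewrite (bigD1 s) //= eqxx big1 // => t /andP [_ /negbTE ->].
rewrite big1 // => t rt; apply/eqP; rewrite eqb0; apply: contraTN rt => /eqP ->.
by rewrite -leqNgt.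
Qed.

Section PauliGroup.
Variable n : nat.
Implicit Types a c e h k : pauli n.

Lemma pmulC a c : pmul a c = pmul c a.
Proof. by apply/ffunP => i; rewrite !ffunE; case: (a i) (c i) => [[] []] [[] []]. Qed.

Lemma pmulA a c e : pmul a (pmul c e) = pmul (pmul a c) e.
Proof.
by apply/ffunP => i; rewrite !ffunE /=; case: (a i) (c i) (e i) => [[] []] [[] []] [[] []].
Qed.

Lemma pmulKl a c : pmul a (pmul a c) = c.
Proof.
by apply/ffunP => i; rewrite !ffunE /=; case: (a i) (c i) => [[] []] [[] []].
Qed.

Lemma pmulK a c : pmul (pmul a c) c = a.
Proof. by rewrite pmulC [pmul a c]pmulC pmulKl. Qed.

Lemma anticommE a c : anticomm a c =
  \big[addb/false]_(i < n) (((a i).1 && (c i).2) (+) ((a i).2 && (c i).1)).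
Proof.
rewrite /anticomm (big_morph odd oddD (erefl (odd 0))).
by apply: eq_bigr => i _; rewrite oddb.
Qed.

Lemma anticommC a c : anticomm a c = anticomm c a.
Proof.
by rewrite !anticommE; apply: eq_bigr => i _; case: (a i) (c i) => [[] []] [[] []].
Qed.

Lemma anticommxx a : anticomm a a = false.
Proof. by rewrite anticommE big1 // => i _; case: (a i) => [[] []]. Qed.

Lemma anticommMl a c e : anticomm (pmul a c) e = anticomm a e (+) anticomm c e.
Proof.
rewrite !anticommE -big_split /=; apply: eq_bigr => i _; rewrite ffunE /=.
by case: (a i) (c i) (e i) => [[] []] [[] []] [[] []].
Qed.

Lemma anticommMr a c e : anticomm a (pmul c e) = anticomm a c (+) anticomm a e.
Proof. by rewrite anticommC anticommMl !(anticommC a). Qed.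

Definition flip h c k := if anticomm k h then pmul h k else pmul (pmul h k) c.

Lemma flip_involutive h c : ~~ anticomm c h -> involutive (flip h c).
Proof.
move=> /negbTE ch k; rewrite /flip.
case hk: (anticomm k h); first by rewrite anticommMl anticommxx hk pmulKl.
by rewrite !anticommMl anticommxx hk ch pmulA pmulKl pmulK.
Qed.

End PauliGroup.

Section Cartan.
Variables (n : nat) (Kt Mt : {set pauli n}).
Hypothesis cartanKtMt : cartan_pauli Kt Mt.

Lemma pmul_KK : {in Kt &, forall x y, anticomm x y -> pmul x y \in Kt}.
Proof. by case: cartanKtMt. Qed.

Lemma pmul_MM : {in Mt &, forall x y, anticomm x y -> pmul x y \in Kt}.
Proof. by case: cartanKtMt. Qed.

Lemma pmul_KM : {in Kt & Mt, forall x y, anticomm x y -> pmul x y \in Mt}.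
Proof. by case: cartanKtMt. Qed.

Lemma pmul_g : {in Kt :|: Mt &, forall x y, anticomm x y -> pmul x y \in Kt :|: Mt}.
Proof.
move=> x y; rewrite !inE => /orP [xK|xM] /orP [yK|yM] xy.
- by rewrite pmul_KK.
- by rewrite pmul_KM ?orbT.
- by rewrite pmulC pmul_KM ?orbT // anticommC.
- by rewrite pmul_MM.
Qed.

Variables (d : nat) (b : 'I_d -> pauli n).
Hypothesis b_in_Mt : forall j, b j \in Mt.
Hypothesis b_commute : forall i j, commute_p (b i) (b j).
Hypothesis b_nonassociative : forall p q s : 'I_d, p != q -> q != s -> p != s ->
  pmul (pmul (b p) (b q)) (b s) \notin Mt.

Definition supp (x : pauli n) : {set 'I_d} := [set j | anticomm x (b j)].

Definition Kwith (S : {set 'I_d}) : {set pauli n} := [set k in Kt | supp k == S].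

Lemma in_supp x j : (j \in supp x) = anticomm x (b j).
Proof. by rewrite inE. Qed.

Lemma in_supp_pmul x y j : (j \in supp (pmul x y)) = (j \in supp x) (+) (j \in supp y).
Proof. by rewrite !inE anticommMl. Qed.

Lemma supp_b i : supp (b i) = set0.
Proof. by apply/setP => j; rewrite !inE; apply/negbTE/b_commute. Qed.

Lemma Kt_anticomm_three_false k i j l : k \in Kt -> i != j -> j != l -> i != l ->
  i \in supp k -> j \in supp k -> l \in supp k -> False.
Proof.
rewrite !in_supp => kK ij jl il ki kj kl.
have kiM : pmul k (b i) \in Mt by apply: pmul_KM.
have kijK : pmul (pmul k (b i)) (b j) \in Kt.
  by apply: pmul_MM; rewrite // anticommMl (negbTE (b_commute i j)) kj.
have kijlM : pmul (pmul (pmul k (b i)) (b j)) (b l) \in Mt.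
  by apply: pmul_KM; rewrite // !anticommMl !(negbTE (b_commute _ l)) kl.
have : pmul k (pmul (pmul (pmul k (b i)) (b j)) (b l)) \in Mt.
  by apply: pmul_KM; rewrite // !anticommMr anticommxx ki kj kl.
by rewrite 2!pmulA pmulKl; apply/negP/b_nonassociative.
Qed.

Lemma card_supp_Kt k : k \in Kt -> #|supp k| <= 2.
Proof.
move=> kK; rewrite leqNgt; apply/card_gt2P => -[i [j [l [[ki kj kl] [ij jl li]]]]].
by apply: (Kt_anticomm_three_false kK ij jl _ ki kj kl); rewrite eq_sym.
Qed.

Lemma Kt_supp_pair k i j : k \in Kt -> i != j -> i \in supp k -> j \in supp k ->
  k \in Kwith [set i; j].
Proof.
move=> kK ij ki kj; rewrite inE kK eq_sym eqEcard cards2 ij card_supp_Kt // andbT.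
by rewrite subUset !sub1set ki kj.
Qed.

Lemma in_supp_flip h u v k j :
  (j \in supp (flip h (pmul (b u) (b v)) k)) = (j \in supp k) (+) (j \in supp h).
Proof.
by rewrite /flip addbC; case: ifP => _; rewrite !in_supp_pmul // !supp_b !in_set0 !addbF.
Qed.

Lemma flip_Kt h u v k : h \in Kt -> u \in supp h -> v \in supp h -> k \in Kt ->
  (u \in supp k) != (v \in supp k) -> flip h (pmul (b u) (b v)) k \in Kt.
Proof.
move=> hK + + kK; wlog /andP [uk vk]: u v / (u \in supp k) && (v \notin supp k).
  move=> wl hu hv; case uk: (u \in supp k) => /= vk; first by apply: wl; rewrite ?uk.
  by rewrite pmulC; apply: wl; rewrite ?uk // -(negbK (v \in _)) vk.
rewrite !inE in uk vk * => hu hv _; rewrite /flip; case: ifP => hk.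
  by apply: pmul_KK; rewrite // anticommC.
have kuM : pmul k (b u) \in Mt by apply: pmul_KM.
have hkuM : pmul h (pmul k (b u)) \in Mt.
  by apply: pmul_KM; rewrite // anticommMr (anticommC h k) hk hu.
rewrite pmulA -(pmulA h); apply: pmul_MM; rewrite //.
by rewrite !anticommMl hv (negbTE vk) (negbTE (b_commute u v)).
Qed.

Lemma card_Kwith_flip h u v (S T : {set 'I_d}) : h \in Kt -> u \in supp h -> v \in supp h ->
  (u \in S) != (v \in S) -> (forall j, (j \in T) = (j \in S) (+) (j \in supp h)) ->
  #|Kwith S| = #|Kwith T|.
Proof.
move=> hK hu hv uvS ST.
have uvT : (u \in T) != (v \in T) by rewrite !ST hu hv !addbT (inj_eq negb_inj).
have finv : involutive (flip h (pmul (b u) (b v))).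
  apply: flip_involutive.
  by rewrite anticommMl !(anticommC (b _)) -!in_supp hu hv.
apply: (card_involutive_swap finv) => k; rewrite !inE => /andP [kK /eqP kS].
  rewrite flip_Kt ?kS //=; apply/eqP/setP => j.
  by rewrite in_supp_flip ST kS.
rewrite flip_Kt ?kS //=; apply/eqP/setP => j.
by rewrite in_supp_flip kS ST -addbA addbb addbF.
Qed.

Lemma card_Ksingle_eq u v h : u != v -> h \in Kwith [set u; v] ->
  #|Kwith [set u]| = #|Kwith [set v]|.
Proof.
move=> uv; rewrite inE => /andP [hK /eqP hS].
apply: (card_Kwith_flip (u := u) (v := v) hK); rewrite ?hS ?inE ?eqxx ?orbT //.
  by rewrite (eq_sym v) (negbTE uv).
by move=> j; rewrite !inE; apply: addb_eq_eq2.
Qed.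

Lemma card_Kpair_eq p q s h : p != q -> q != s -> p != s -> h \in Kwith [set q; s] ->
  #|Kwith [set p; q]| = #|Kwith [set p; s]|.
Proof.
move=> pq qs ps; rewrite inE => /andP [hK /eqP hS].
apply: (card_Kwith_flip (u := q) (v := s) hK); rewrite ?hS ?inE ?eqxx ?orbT //.
  by rewrite !(eq_sym s) (negbTE ps) (negbTE qs).
by move=> j; rewrite !inE; apply: addb_eq2_eq2.
Qed.

Definition linked p q := p = q \/ exists k, k \in Kwith [set p; q].

Lemma linked_trans i j l : linked i j -> linked j l -> linked i l.
Proof.
case=> [-> // | [k ijk]] [<- | [k' jlk']]; first by right; exists k.
have [-> | il] := eqVneq i l; first by left.
have [ij | ij] := eqVneq i j; first by right; exists k'; rewrite ij.
have [jl | jl] := eqVneq j l; first by right; exists k; rewrite -jl.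
right; apply/set0Pn; rewrite -card_gt0 -(card_Kpair_eq ij jl il jlk').
by apply/card_gt0P; exists k.
Qed.

Lemma g_linked x i j : x \in Kt :|: Mt -> i \in supp x -> j \in supp x -> linked i j.
Proof.
move=> xg xi xj; have [-> | ij] := eqVneq i j; [by left | right].
have [y yK supp_y] : exists2 y, y \in Kt & supp y = supp x.
  move: xg; rewrite inE => /orP [xK | xM]; first by exists x.
  exists (pmul x (b i)); first by apply: pmul_MM; rewrite // -in_supp.
  by apply/setP => l; rewrite in_supp_pmul supp_b in_set0 addbF.
by exists y; apply: Kt_supp_pair; rewrite ?supp_y.
Qed.

(* Along a frustration path starting next to b p, the current vertex is, or
   anticommutes with, an element of g whose support meets the class of p. *)
Definition anchored p x := x \in Kt :|: Mt /\ exists2 i, i \in supp x & linked p i.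

Definition near p v := exists2 x, anchored p x & v = x \/ anticomm v x.

Lemma near_step p v w : near p v -> frustration (Kt :|: Mt) v w -> near p w.
Proof.
move=> [x [xg [i xi pi]] vx] /and3P [vg wg vw].
case vi: (i \in supp v).
  by exists v; [split=> //; exists i | right; rewrite anticommC].
have {}vx : anticomm v x by case: vx => // vx; move: vi; rewrite vx xi.
case wx: (anticomm w x); first by exists x => //; [split=> //; exists i | right].
exists (pmul x v); last by right; rewrite anticommMr wx anticommC vw.
split; first by apply: pmul_g; rewrite // anticommC.
by exists i; rewrite // in_supp_pmul xi vi.
Qed.

Lemma near_path p x s : near p x -> path (frustration (Kt :|: Mt)) x s -> near p (last x s).
Proof.
elim: s x => //= y s IHs x px /andP [xy ys].
by apply: IHs ys; apply: near_step xy.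
Qed.

Hypothesis b_inj : injective b.
Hypothesis b_connected : forall i j, connect (frustration (Kt :|: Mt)) (b i) (b j).

Lemma linked_all p q : linked p q.
Proof.
have [-> | pq] := eqVneq p q; first by left.
have /connectP [[| y s] /=] := b_connected p q.
  by move=> _ /b_inj qp; move: pq; rewrite qp eqxx.
case/andP => /and3P [_ yg py] ys last_q.
have near_y : near p y.
  exists y; last by left.
  by split=> //; exists p; [rewrite inE anticommC | left].
have := near_path near_y ys; rewrite -last_q => -[x [xg [i xi pi]] [qx | qx]].
  by move: xi; rewrite -qx supp_b in_set0.
by apply: linked_trans pi (g_linked xg xi _); rewrite inE anticommC.
Qed.

Lemma Kpair_nonempty p q : p != q -> exists k, k \in Kwith [set p; q].
Proof. by case: (linked_all p q) => // ->; rewrite eqxx. Qed.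

Lemma card_Ksingle_const u v : #|Kwith [set u]| = #|Kwith [set v]|.
Proof.
have [-> // | uv] := eqVneq u v.
by have [h uvh] := Kpair_nonempty uv; apply: card_Ksingle_eq uvh.
Qed.

Lemma card_Kpair_const p q p' q' : p != q -> p' != q' ->
  #|Kwith [set p; q]| = #|Kwith [set p'; q']|.
Proof.
have move_snd x y y' : x != y -> x != y' -> #|Kwith [set x; y]| = #|Kwith [set x; y']|.
  move=> xy xy'; have [-> // | yy'] := eqVneq y y'.
  by have [h yy'h] := Kpair_nonempty yy'; apply: card_Kpair_eq yy'h.
move=> pq p'q'; rewrite eq_sym in p'q'; have [pq' | pq'] := eqVneq p q'.
  by subst q'; rewrite (move_snd _ _ p') // setUC.
have q'p : q' != p by rewrite eq_sym.
by rewrite (move_snd _ _ q') // setUC (move_snd _ _ p') // setUC.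
Qed.

Lemma ksub_compl (A C : pred nat) : (forall j, C j = ~~ A j) ->
  ksub Kt b A C = Kwith [set j : 'I_d | A j].
Proof.
move=> CA; apply/setP => k; rewrite !inE; case: (k \in Kt) => //=.
apply/andP/eqP => [[/forallP kA /forallP kC] | kS].
  apply/setP => j; rewrite !inE; have := kA j; have := kC j.
  by rewrite !unfold_in CA /commute_p; case: (A j) => //= /negbTE.
split; apply/forallP => j; rewrite unfold_in ?CA /commute_p -in_supp kS inE.
  exact/implyP.
exact/implyP.
Qed.

Lemma card_ksub_least r :
  #|ksub Kt b (pred1 (nat_of_ord r)) (fun j => j < r)| =
  #|Kwith [set r]| + \sum_(s : 'I_d | r < s) #|Kwith [set r; s]|.
Proof.
under eq_bigr do rewrite card_indicator.
rewrite exchange_big !card_indicator -big_split /=; apply: eq_bigr => k _.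
under eq_bigr do rewrite inE.
rewrite !inE; case kK: (k \in Kt); last by rewrite big1.
rewrite -least_card_le2 ?card_supp_Kt //=; congr (_ && _).
  apply/forallP/idP => [/(_ r) | kr j]; first by rewrite !inE eqxx.
  by apply/implyP => /eqP/val_inj ->; rewrite inE in kr.
apply/forallP/forall_inP => [kr j | kr j].
  rewrite inE => kj; rewrite leqNgt; apply/negP => jr.
  by move: (implyP (kr j) jr); rewrite /commute_p kj.
apply/implyP => jr; apply: contraL jr => kj.
by rewrite unfold_in -leqNgt kr ?inE.
Qed.

End Cartan.

Theorem theoremC3 (n d : nat) (Kt Mt : {set pauli n}) (b : 'I_d -> pauli n) :
  cartan_pauli Kt Mt ->
  2 <= d ->
  injective b ->
  (forall j, b j \in Mt) ->
  (forall i j, commute_p (b i) (b j)) ->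
  (forall i j, connect (frustration (Kt :|: Mt)) (b i) (b j)) ->
  (forall p q s : 'I_d, p != q -> q != s -> p != s ->
     pmul (pmul (b p) (b q)) (b s) \notin Mt) ->
  forall r : 'I_d,
    #|ksub Kt b (pred1 (nat_of_ord r)) (fun j => j < r)| =
    #|ksub Kt b (pred1 0) (fun j => 1 <= j)|
    + (d - r.+1) * #|ksub Kt b (fun j => j < 2) (fun j => 2 <= j)|.
Proof.
move=> cartanKtMt d_ge2 b_inj b_in_Mt b_commute b_connected b_nonassoc r.
pose o0 : 'I_d := Ordinal (ltnW d_ge2); pose o1 : 'I_d := Ordinal d_ge2.
have -> : ksub Kt b (pred1 0) (fun j => 1 <= j) = Kwith Kt b [set o0].
  rewrite ksub_compl => [|j]; last by rewrite lt0n.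
  by congr Kwith; apply/setP => j; rewrite !inE -val_eqE.
have -> : ksub Kt b (fun j => j < 2) (fun j => 2 <= j) = Kwith Kt b [set o0; o1].
  rewrite ksub_compl => [|j]; last by rewrite leqNgt.
  by congr Kwith; apply/setP => -[[|[|j]] ?]; rewrite !inE -!val_eqE.
have card_Ksingle :=
  card_Ksingle_const cartanKtMt b_in_Mt b_commute b_nonassoc b_inj b_connected.
have card_Kpair :=
  card_Kpair_const cartanKtMt b_in_Mt b_commute b_nonassoc b_inj b_connected.
rewrite (card_ksub_least cartanKtMt b_in_Mt b_commute b_nonassoc) (card_Ksingle r o0).
rewrite -sum_nat_const_nat big_geq_mkord; congr (_ + _); apply: eq_bigr => s rs.
by apply: card_Kpair; rewrite // neq_ltn rs.
Qed.
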